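(* Let $\mathrm{param}$ be a type with a function $\mathrm{varsOf}:\mathrm{param}\to\mathrm{varsort}\to\mathrm{var}\;\mathrm{set}$, and let $\phi:\mathrm{term}\to\mathrm{param}\to\mathrm{bool}$ and $\phi_{Abs}:\mathrm{abs}\to\mathrm{param}\to\mathrm{bool}$. Assume: (1) for all $xs,p$: $|\mathrm{varsOf}\;p\;xs|<|\mathrm{var}|$; (2) for all $xs,x,p$: $\phi\;(\mathrm{Var}\;xs\;x)\;p$; (3) for all $\delta,inp,binp,p$: if $|\mathrm{dom}\;inp|<|\mathrm{var}|$, $|\mathrm{dom}\;binp|<|\mathrm{var}|$, every value $X$ of $inp$ is good and satisfies $\forall q.\,\phi\;X\;q$, and every value $A$ of $binp$ is good and satisfies $\forall q.\,\phi_{Abs}\;A\;q$, then $\phi\;(\mathrm{Op}\;\delta\;inp\;binp)\;p$; (4) for all $xs,x,X,p$: if $X$ is good, $\phi\;X\;p$ and $x\notin\mathrm{varsOf}\;p\;xs$, then $\phi_{Abs}\;(\mathrm{Abs}\;xs\;x\;X)\;p$. Then $\phi\;X\;p$ holds for all good terms $X$ and all $p$, and $\phi_{Abs}\;A\;p$ holds for all good abstractions $A$ and all $p$.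
   Context: Fix types $\mathrm{var}$, $\mathrm{varsort}$, $\mathrm{index}$, $\mathrm{bindex}$, $\mathrm{opsym}$, with $|\mathrm{var}|$ an infinite regular cardinal. $(\alpha,\beta)\,\mathrm{input}$ = partial functions $\alpha\to\beta\;\mathrm{option}$; $\mathrm{dom}\,f=\{i\mid f\,i\ne\mathrm{None}\}$. Terms ($\mathrm{term}$) and abstractions ($\mathrm{abs}$) are alpha-equivalence classes of the free mutually recursive datatypes $\mathrm{qterm}=\mathrm{qVar}\;\mathrm{varsort}\;\mathrm{var}\mid\mathrm{qOp}\;\mathrm{opsym}\;((\mathrm{index},\mathrm{qterm})\mathrm{input})\;((\mathrm{bindex},\mathrm{qabs})\mathrm{input})$, $\mathrm{qabs}=\mathrm{qAbs}\;\mathrm{varsort}\;\mathrm{var}\;\mathrm{qterm}$ (in $\mathrm{qAbs}\;xs\;x\;X$, $x$ of varsort $xs$ is bound in $X$), with lifted constructors $\mathrm{Var}$, $\mathrm{Op}$, $\mathrm{Abs}$. A term/abstraction is good if every $\mathrm{Op}$ node in it has free and bound inputs with domains of cardinality $<|\mathrm{var}|$. *)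

From Stdlib Require Import ClassicalEpsilon Relation_Operators.

Set Implicit Arguments.

Definition injective {A B : Type} (f : A -> B) := forall x y, f x = f y -> x = y.

Definition cardLt {A : Type} (P : A -> Prop) (B : Type) : Prop :=
  (exists f : sig P -> B, injective f) /\ ~ (exists g : B -> sig P, injective g).

Definition infiniteT (V : Type) : Prop := exists f : nat -> V, injective f.

Definition regularT (V : Type) : Prop :=
  forall (I : Type) (F : I -> V -> Prop),
    cardLt (fun _ : I => True) V ->
    (forall i, cardLt (F i) V) ->
    cardLt (fun v => exists i, F i v) V.

Definition input (A B : Type) := A -> option B.
Definition dom {A B : Type} (f : input A B) : A -> Prop := fun i => f i <> None.

Section Terms.
Variables var varsort index bindex opsym : Type.

Inductive qterm : Type :=
| qVar : varsort -> var -> qterm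
| qOp : opsym -> (index -> option qterm) -> (bindex -> option qabs) -> qterm
with qabs : Type :=
| qAbs : varsort -> var -> qterm -> qabs.

Definition eq_decide {A : Type} (a b : A) : bool :=
  if excluded_middle_informative (a = b) then true else false.

Definition sw (xs : varsort) (x y : var) (zs : varsort) (z : var) : var :=
  if eq_decide zs xs then
    (if eq_decide z x then y else if eq_decide z y then x else z)
  else z.

Fixpoint qSwap (xs : varsort) (x y : var) (X : qterm) {struct X} : qterm :=
  match X with
  | qVar zs z => qVar zs (sw xs x y zs z)
  | qOp d inp binp =>
      qOp d (fun i => match inp i with Some Y => Some (qSwap xs x y Y) | None => None end)
            (fun i => match binp i with Some A => Some (qSwapAbs xs x y A) | None => None end)
  end
with qSwapAbs (xs : varsort) (x y : var) (A : qabs) {struct A} : qabs :=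
  match A with
  | qAbs zs z Y => qAbs zs (sw xs x y zs z) (qSwap xs x y Y)
  end.

Fixpoint qFresh (xs : varsort) (x : var) (X : qterm) {struct X} : Prop :=
  match X with
  | qVar zs z => ~ (zs = xs /\ z = x)
  | qOp _ inp binp =>
      (forall i, match inp i with Some Y => qFresh xs x Y | None => True end) /\
      (forall i, match binp i with Some A => qFreshAbs xs x A | None => True end)
  end
with qFreshAbs (xs : varsort) (x : var) (A : qabs) {struct A} : Prop :=
  match A with
  | qAbs zs z Y => (zs = xs /\ z = x) \/ qFresh xs x Y
  end.

Fixpoint qGood (X : qterm) : Prop :=
  match X with
  | qVar _ _ => True
  | qOp _ inp binp =>
      cardLt (dom inp) var /\ cardLt (dom binp) var /\
      (forall i, match inp i with Some Y => qGood Y | None => True end) /\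
      (forall i, match binp i with Some A => qGoodAbs A | None => True end)
  end
with qGoodAbs (A : qabs) : Prop :=
  match A with
  | qAbs _ _ Y => qGood Y
  end.

Inductive alpha : qterm -> qterm -> Prop :=
| alpha_Var : forall xs x, alpha (qVar xs x) (qVar xs x)
| alpha_Op : forall d inp inp' binp binp',
    (forall i, inp i = None <-> inp' i = None) ->
    (forall i X X', inp i = Some X -> inp' i = Some X' -> alpha X X') ->
    (forall i, binp i = None <-> binp' i = None) ->
    (forall i A A', binp i = Some A -> binp' i = Some A' -> alphaAbs A A') ->
    alpha (qOp d inp binp) (qOp d inp' binp')
with alphaAbs : qabs -> qabs -> Prop :=
| alpha_Abs : forall xs x x' X X' y,
    y <> x -> y <> x' -> qFresh xs y X -> qFresh xs y X' ->
    alpha (qSwap xs y x X) (qSwap xs y x' X') ->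
    alphaAbs (qAbs xs x X) (qAbs xs x' X').

(* the equivalence generated by alpha (alpha itself is an equivalence on
   good quasi-terms, which is all the theorem is about) *)
Definition alphaE : qterm -> qterm -> Prop := clos_refl_sym_trans qterm alpha.
Definition alphaAbsE : qabs -> qabs -> Prop := clos_refl_sym_trans qabs alphaAbs.

Definition term : Type := { C : qterm -> Prop | exists X, C = alphaE X }.
Definition abs : Type := { C : qabs -> Prop | exists A, C = alphaAbsE A }.

Definition clsT (X : qterm) : term := exist _ (alphaE X) (ex_intro _ X eq_refl).
Definition clsA (A : qabs) : abs := exist _ (alphaAbsE A) (ex_intro _ A eq_refl).

Definition repT (T : term) : qterm :=
  proj1_sig (constructive_indefinite_description _ (proj2_sig T)).
Definition repA (T : abs) : qabs :=
  proj1_sig (constructive_indefinite_description _ (proj2_sig T)).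

Definition Var (xs : varsort) (x : var) : term := clsT (qVar xs x).
Definition Op (d : opsym) (inp : input index term) (binp : input bindex abs) : term :=
  clsT (qOp d (fun i => match inp i with Some T => Some (repT T) | None => None end)
              (fun i => match binp i with Some A => Some (repA A) | None => None end)).
Definition Abs (xs : varsort) (x : var) (T : term) : abs := clsA (qAbs xs x (repT T)).

Definition good (T : term) : Prop := qGood (repT T).
Definition goodAbs (A : abs) : Prop := qGoodAbs (repA A).

End Terms.

Arguments Var {var varsort index bindex opsym}.
Arguments Op {var varsort index bindex opsym}.
Arguments Abs {var varsort index bindex opsym}.
Arguments good {var varsort index bindex opsym}.
Arguments goodAbs {var varsort index bindex opsym}.

(* Induction on a representative quasi-term, generalized over all injective renamings of
   its variables.  In an abstraction [qAbs s x Y] the bound variable is first renamed to a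
   y outside [varsOf p] and the variables of Y: there are fewer than |var| of these because
   var is infinite and regular.  The abstraction is alpha-equivalent to [qAbs s y Y'] with
   Y' obtained by swapping x and y, and Y' is again a renaming of Y, so the induction
   hypothesis applies to it.  For an Op node, the class of the quasi-term is Op applied to
   the classes of its inputs; this needs alpha-equivalence to be an equivalence relation on
   good quasi-terms, and its transitivity is proved by the same induction over renamings. *)

From Stdlib Require Import ClassicalEpsilon Relation_Operators FunctionalExtensionality
  ProofIrrelevance PropExtensionality Classical.

Lemma cardLt_subset {A V : Type} (P Q : A -> Prop) :
  (forall a, P a -> Q a) -> cardLt Q V -> cardLt P V.
Proof.
  intros HPQ [[f Hf] Hnot]. split.
  - exists (fun p => f (exist _ (proj1_sig p) (HPQ _ (proj2_sig p)))).
    intros [a pa] [b pb] E. apply Hf in E. injection E as ->.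
    apply subset_eq_compat; reflexivity.
  - intros [g Hg]. apply Hnot.
    exists (fun v => exist _ (proj1_sig (g v)) (HPQ _ (proj2_sig (g v)))).
    intros x y E. apply Hg. injection E as E.
    destruct (g x), (g y); simpl in E. apply subset_eq_compat; exact E.
Qed.

Lemma cardLt_exists_notin {A : Type} (P : A -> Prop) : cardLt P A -> exists a, ~ P a.
Proof.
  intros [_ Hnot]. apply NNPP. intro Hall. apply Hnot.
  assert (HP : forall a, P a) by (intro a; apply NNPP; intro; apply Hall; eauto).
  exists (fun a => exist _ a (HP a)). intros x y E. injection E; auto.
Qed.

Lemma cardLt_index_set {V I : Type} (D : I -> Prop) :
  cardLt D V -> cardLt (fun _ : sig D => True) V.
Proof.
  intros [[f Hf] Hnot]. split.
  - exists (fun p => f (proj1_sig p)).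
    intros [x []] [y []]; simpl; intro E. apply Hf in E. subst. reflexivity.
  - intros [g Hg]. apply Hnot. exists (fun v => proj1_sig (g v)).
    intros x y E. apply Hg. destruct (g x) as [a []], (g y) as [b []]; simpl in *.
    subst. reflexivity.
Qed.

Section SmallSets.
Variable V : Type.
Hypothesis V_infinite : infiniteT V.
Hypothesis V_regular : regularT V.

Lemma cardLt_empty (A : Type) : cardLt (fun _ : A => False) V.
Proof.
  split.
  - exists (fun p => False_rect V (proj2_sig p)). intros [? []].
  - intros [g _]. destruct V_infinite as [f _]. destruct (g (f 0)) as [_ []].
Qed.

Lemma cardLt_singleton (a : V) : cardLt (fun v => v = a) V.
Proof.
  split.
  - exists (@proj1_sig _ _). intros [x px] [y py] E; simpl in E; subst.
    apply subset_eq_compat; reflexivity.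
  - intros [g Hg]. destruct V_infinite as [f Hf].
    assert (E : g (f 0) = g (f 1)).
    { destruct (g (f 0)) as [x px], (g (f 1)) as [y py]. subst.
      apply subset_eq_compat; reflexivity. }
    apply Hg, Hf in E. discriminate.
Qed.

Lemma cardLt_bool : cardLt (fun _ : bool => True) V.
Proof.
  destruct V_infinite as [f Hf]. split.
  - exists (fun b : sig (fun _ : bool => True) => if proj1_sig b then f 0 else f 1).
    intros [[|] []] [[|] []]; simpl; intro E; auto; apply Hf in E; discriminate.
  - intros [g Hg].
    (* g o f would inject nat into bool: among g (f 0), g (f 1), g (f 2) two agree *)
    assert (Hk : forall n m, proj1_sig (g (f n)) = proj1_sig (g (f m)) -> n = m).
    { intros n m E. apply Hf, Hg.
      destruct (g (f n)) as [b []], (g (f m)) as [c []]; simpl in E; subst; reflexivity. }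
    destruct (proj1_sig (g (f 0))) eqn:E0, (proj1_sig (g (f 1))) eqn:E1,
      (proj1_sig (g (f 2))) eqn:E2;
    first [ assert (0 = 1) by (apply Hk; congruence)
          | assert (0 = 2) by (apply Hk; congruence)
          | assert (1 = 2) by (apply Hk; congruence) ]; discriminate.
Qed.

Lemma cardLt_union (P Q : V -> Prop) :
  cardLt P V -> cardLt Q V -> cardLt (fun v => P v \/ Q v) V.
Proof.
  intros HP HQ.
  apply (cardLt_subset _ (fun v => exists b : bool, (if b then P else Q) v)).
  - intros a [H|H]; [exists true | exists false]; exact H.
  - apply V_regular; [apply cardLt_bool | intros []; assumption].
Qed.

Lemma cardLt_bigunion_input {I B : Type} (inp : input I B) (F : B -> V -> Prop) :
  cardLt (dom inp) V ->
  (forall i, match inp i with Some b => cardLt (F b) V | None => True end) ->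
  cardLt (fun v => exists i, match inp i with Some b => F b v | None => False end) V.
Proof.
  intros Hdom HF.
  apply (cardLt_subset _ (fun v => exists j : sig (dom inp),
     match inp (proj1_sig j) with Some b => F b v | None => False end)).
  - intros v [i Hi]. destruct (inp i) eqn:E; [|contradiction].
    assert (Hdi : dom inp i) by (unfold dom; congruence).
    exists (exist _ i Hdi); simpl; rewrite E; exact Hi.
  - apply V_regular; [apply cardLt_index_set; exact Hdom|].
    intros [i Hi]; simpl. specialize (HF i). destruct (inp i); [exact HF | apply cardLt_empty].
Qed.

End SmallSets.

Section ReflSymTransClosure.
Variables (A : Type) (R : A -> A -> Prop).
Notation E := (clos_refl_sym_trans A R).

Lemma clos_rst_invariant (G : A -> Prop) :
  (forall a b, R a b -> G a -> G b) -> (forall a b, R a b -> R b a) ->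
  forall a b, E a b -> (G a <-> G b).
Proof.
  intros HG Hsym a b Hab. induction Hab; try tauto.
  split; [apply HG | apply HG, Hsym]; assumption.
Qed.

Lemma clos_rst_partial_equiv (G : A -> Prop) :
  (forall a b, R a b -> G a -> G b) -> (forall a b, R a b -> R b a) ->
  (forall a, G a -> R a a) -> (forall a b c, G a -> R a b -> R b c -> R a c) ->
  forall a b, E a b -> G a -> R a b.
Proof.
  intros HG Hsym Hrefl Htrans a b Hab.
  induction Hab as [| | a b Hab IH | a b c Hab IHab Hbc IHbc]; intro Ga.
  - assumption.
  - apply Hrefl, Ga.
  - apply Hsym, IH. apply (clos_rst_invariant G HG Hsym _ _ Hab), Ga.
  - apply (Htrans a b c Ga); [apply IHab, Ga |].
    apply IHbc. apply (clos_rst_invariant G HG Hsym _ _ Hab), Ga.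
Qed.

Lemma clos_rst_class_eq a b pa pb :
  E a b -> exist (fun C => exists x, C = E x) (E a) pa = exist _ (E b) pb.
Proof.
  intro Hab. apply subset_eq_compat.
  apply functional_extensionality; intro c. apply propositional_extensionality.
  split; intro H.
  - eapply rst_trans; [apply rst_sym, Hab | exact H].
  - eapply rst_trans; [exact Hab | exact H].
Qed.

Lemma clos_rst_class_choice (C : A -> Prop) (h : exists x, C = E x) :
  C = E (proj1_sig (constructive_indefinite_description _ h)).
Proof. exact (proj2_sig (constructive_indefinite_description _ h)). Qed.

End ReflSymTransClosure.

Section QuasiTerms.
Variables var varsort index bindex opsym : Type.
Notation qT := (qterm var varsort index bindex opsym).
Notation qA := (qabs var varsort index bindex opsym).
Notation qV := (qVar index bindex opsym).
Implicit Types (xs zs s : varsort) (a b u v w x y z : var) (f g : varsort -> var -> var).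

Section MutualInduction.
Variables (P : qT -> Prop) (Q : qA -> Prop).
Hypothesis P_qVar : forall s x, P (qV s x).
Hypothesis P_qOp : forall d inp binp,
  (forall i, match inp i with Some Y => P Y | None => True end) ->
  (forall i, match binp i with Some A => Q A | None => True end) ->
  P (qOp d inp binp).
Hypothesis Q_qAbs : forall s x Y, P Y -> Q (qAbs s x Y).

Fixpoint qterm_all (X : qT) : P X :=
  match X with
  | qVar _ _ _ s x => P_qVar s x
  | qOp d inp binp => P_qOp d inp binp
      (fun i => match inp i as o return match o with Some Y => P Y | None => True end with
                | Some Y => qterm_all Y
                | None => I
                end)
      (fun i => match binp i as o return match o with Some A => Q A | None => True end with
                | Some A => qabs_all A
                | None => I
                end)
  end
with qabs_all (A : qA) : Q A :=
  match A with qAbs s x Y => Q_qAbs s x Y (qterm_all Y) end.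

Lemma qterm_qabs_ind : (forall X, P X) /\ (forall A, Q A).
Proof. exact (conj qterm_all qabs_all). Qed.

End MutualInduction.

Fixpoint qMap (f : varsort -> var -> var) (X : qT) : qT :=
  match X with
  | qVar _ _ _ s x => qV s (f s x)
  | qOp d inp binp =>
      qOp d (fun i => match inp i with Some Y => Some (qMap f Y) | None => None end)
            (fun i => match binp i with Some A => Some (qMapAbs f A) | None => None end)
  end
with qMapAbs (f : varsort -> var -> var) (A : qA) : qA :=
  match A with qAbs s x Y => qAbs s (f s x) (qMap f Y) end.

(* Unlike [qFresh], [qOcc] also counts binding occurrences. *)
Fixpoint qOcc (s : varsort) (v : var) (X : qT) : Prop :=
  match X with
  | qVar _ _ _ zs z => zs = s /\ z = v
  | qOp _ inp binp =>
      (exists i, match inp i with Some Y => qOcc s v Y | None => False end) \/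
      (exists i, match binp i with Some A => qOccAbs s v A | None => False end)
  end
with qOccAbs (s : varsort) (v : var) (A : qA) : Prop :=
  match A with qAbs zs z Y => (zs = s /\ z = v) \/ qOcc s v Y end.

Definition injective_sorted (f : varsort -> var -> var) :=
  forall s a b, f s a = f s b -> a = b.

Ltac map_equation :=
  apply qterm_qabs_ind; simpl;
  [ reflexivity
  | let i := fresh "i" in
    intros ? inp binp IHi IHb; f_equal; apply functional_extensionality; intro i;
    [ specialize (IHi i); destruct (inp i); [f_equal; exact IHi | reflexivity]
    | specialize (IHb i); destruct (binp i); [f_equal; exact IHb | reflexivity] ]
  | congruence ].

Lemma qSwap_qMap xs a b :
  (forall X : qT, qSwap xs a b X = qMap (sw xs a b) X) /\
  (forall A : qA, qSwapAbs xs a b A = qMapAbs (sw xs a b) A).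
Proof. map_equation. Qed.

Lemma qMap_comp f g :
  (forall X : qT, qMap f (qMap g X) = qMap (fun s v => f s (g s v)) X) /\
  (forall A : qA, qMapAbs f (qMapAbs g A) = qMapAbs (fun s v => f s (g s v)) A).
Proof. map_equation. Qed.

Lemma qMap_id :
  (forall X : qT, qMap (fun _ v => v) X = X) /\
  (forall A : qA, qMapAbs (fun _ v => v) A = A).
Proof. map_equation. Qed.

Lemma qOcc_qMap f :
  (forall (X : qT) s v, qOcc s v (qMap f X) -> exists u, qOcc s u X /\ f s u = v) /\
  (forall (A : qA) s v, qOccAbs s v (qMapAbs f A) -> exists u, qOccAbs s u A /\ f s u = v).
Proof.
  apply qterm_qabs_ind; simpl.
  - intros zs z s v [-> <-]. eauto.
  - intros d inp binp IHi IHb s v [[i Hi]|[i Hi]].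
    + specialize (IHi i). destruct (inp i) eqn:E; [|contradiction].
      destruct (IHi s v Hi) as [u [Hu <-]]. exists u. split; [|reflexivity].
      left. exists i. rewrite E. exact Hu.
    + specialize (IHb i). destruct (binp i) eqn:E; [|contradiction].
      destruct (IHb s v Hi) as [u [Hu <-]]. exists u. split; [|reflexivity].
      right. exists i. rewrite E. exact Hu.
  - intros zs z Y IH s v [[-> <-]|Hv].
    + exists z. auto.
    + destruct (IH s v Hv) as [u [Hu <-]]. eauto.
Qed.

Lemma qFresh_of_not_qOcc :
  (forall (X : qT) s v, ~ qOcc s v X -> qFresh s v X) /\
  (forall (A : qA) s v, ~ qOccAbs s v A -> qFreshAbs s v A).
Proof.
  apply qterm_qabs_ind; simpl.
  - intros zs z s v Hnot [-> ->]. auto.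
  - intros d inp binp IHi IHb s v Hnot. split; intro i.
    + specialize (IHi i). destruct (inp i) eqn:E; [|exact I].
      apply IHi. intro Hv. apply Hnot. left. exists i. rewrite E. exact Hv.
    + specialize (IHb i). destruct (binp i) eqn:E; [|exact I].
      apply IHb. intro Hv. apply Hnot. right. exists i. rewrite E. exact Hv.
  - intros zs z Y IH s v Hnot. right. apply IH. auto.
Qed.

Lemma qFresh_qMap f (Hf : injective_sorted f) :
  (forall (X : qT) s v, qFresh s v X -> qFresh s (f s v) (qMap f X)) /\
  (forall (A : qA) s v, qFreshAbs s v A -> qFreshAbs s (f s v) (qMapAbs f A)).
Proof.
  apply qterm_qabs_ind; simpl.
  - intros zs z s v Hfresh [-> E]. apply Hf in E. auto.
  - intros d inp binp IHi IHb s v [Hi Hb]. split; intro i.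
    + specialize (IHi i); specialize (Hi i). destruct (inp i); auto.
    + specialize (IHb i); specialize (Hb i). destruct (binp i); auto.
  - intros zs z Y IH s v [[-> ->]|HY]; auto.
Qed.

Lemma qGood_qMap f :
  (forall X : qT, qGood (qMap f X) <-> qGood X) /\
  (forall A : qA, qGoodAbs (qMapAbs f A) <-> qGoodAbs A).
Proof.
  apply qterm_qabs_ind; simpl.
  - reflexivity.
  - intros d inp binp IHi IHb.
    split; intros [Hdom [Hbdom [Hi Hb]]]; (split; [| split; [| split]]).
    all: try (revert Hdom; apply cardLt_subset; unfold dom; intro i;
              destruct (inp i); congruence).
    all: try (revert Hbdom; apply cardLt_subset; unfold dom; intro i;
              destruct (binp i); congruence).
    all: intro i; first
      [ specialize (IHi i); specialize (Hi i); destruct (inp i);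
        [apply IHi; exact Hi | exact I]
      | specialize (IHb i); specialize (Hb i); destruct (binp i);
        [apply IHb; exact Hb | exact I] ].
  - auto.
Qed.

Hypothesis var_infinite : infiniteT var.
Hypothesis var_regular : regularT var.

Lemma cardLt_qOcc :
  (forall X : qT, qGood X -> forall s, cardLt (fun v => qOcc s v X) var) /\
  (forall A : qA, qGoodAbs A -> forall s, cardLt (fun v => qOccAbs s v A) var).
Proof.
  apply qterm_qabs_ind; simpl.
  - intros zs z _ s. apply (cardLt_subset _ (fun v => v = z)).
    + intros v [_ <-]. reflexivity.
    + apply cardLt_singleton; assumption.
  - intros d inp binp IHi IHb [Hdom [Hbdom [Hi Hb]]] s.
    apply cardLt_union; try assumption.
    + apply cardLt_bigunion_input; try assumption.
      intro i. specialize (IHi i); specialize (Hi i). destruct (inp i); auto.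
    + apply cardLt_bigunion_input; try assumption.
      intro i. specialize (IHb i); specialize (Hb i). destruct (binp i); auto.
  - intros zs z Y IH HY s.
    apply (cardLt_subset _ (fun v => qOcc s v Y \/ v = z)).
    + intros v [[_ <-]|Hv]; auto.
    + apply cardLt_union; auto. apply cardLt_singleton; assumption.
Qed.

Ltac split_not_or :=
  repeat match goal with H : ~ (_ \/ _) |- _ => apply not_or_and in H; destruct H end.

Ltac cardLt_small :=
  repeat first
    [ assumption
    | apply (cardLt_union _ var_infinite var_regular)
    | apply (cardLt_singleton _ var_infinite)
    | apply (proj1 cardLt_qOcc) ].

Ltac pick_fresh u P :=
  destruct (cardLt_exists_notin P) as [u ?]; [cardLt_small | split_not_or].

Ltac sw_cases :=
  unfold sw, eq_decide in *;
  repeat (match goal with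
          | |- context [excluded_middle_informative ?P] =>
              lazymatch P with context [excluded_middle_informative _] => fail | _ =>
              destruct (excluded_middle_informative P) end
          end; subst; try congruence;
          repeat match goal with
                 | Hf : injective_sorted ?f, H : ?f ?s ?a = ?f ?s ?b |- _ => apply Hf in H; subst
                 end;
          try congruence).

Lemma sw_same xs a zs v : sw xs a a zs v = v.
Proof. sw_cases. Qed.

Lemma sw_comm xs a b zs v : sw xs a b zs v = sw xs b a zs v.
Proof. sw_cases. Qed.

Lemma sw_fix xs a b zs v :
  ~ (zs = xs /\ v = a) -> ~ (zs = xs /\ v = b) -> sw xs a b zs v = v.
Proof. intros; sw_cases; tauto. Qed.

Lemma sw_preimage_fix xs a b w u : sw xs a b xs w = u -> u <> a -> u <> b -> w = u.
Proof. intros E ? ?; revert E; sw_cases. Qed.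

Lemma sw_sw_conj xs w y x zs v : x <> w -> x <> y ->
  sw xs w y zs (sw xs y x zs v) = sw xs w x zs (sw xs w y zs v).
Proof. intros; sw_cases. Qed.

Lemma sw_injective xs a b : injective_sorted (sw xs a b).
Proof. intros zs u v; sw_cases. Qed.

Lemma injective_sorted_id : injective_sorted (fun _ v => v).
Proof. intros s a b E; exact E. Qed.

Lemma injective_sorted_comp f g :
  injective_sorted f -> injective_sorted g -> injective_sorted (fun s v => f s (g s v)).
Proof. intros Hf Hg s a b E. apply (Hg s), (Hf s), E. Qed.

Lemma sw_injective_conj f (Hf : injective_sorted f) xs y x zs v :
  f zs (sw xs y x zs v) = sw xs (f xs y) (f xs x) zs (f zs v).
Proof. sw_cases. Qed.

Lemma qSwap_qSwap_eq xs1 a1 b1 xs2 a2 b2 xs3 a3 b3 xs4 a4 b4 (X : qT) :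
  (forall zs v, sw xs1 a1 b1 zs (sw xs2 a2 b2 zs v) = sw xs3 a3 b3 zs (sw xs4 a4 b4 zs v)) ->
  qSwap xs1 a1 b1 (qSwap xs2 a2 b2 X) = qSwap xs3 a3 b3 (qSwap xs4 a4 b4 X).
Proof.
  intro E. rewrite !(proj1 (qSwap_qMap _ _ _)), !(proj1 (qMap_comp _ _)). f_equal.
  do 2 (apply functional_extensionality; intro). apply E.
Qed.

Lemma qSwap_same xs a (X : qT) : qSwap xs a a X = X.
Proof.
  rewrite (proj1 (qSwap_qMap _ _ _)). rewrite <- (proj1 qMap_id X) at 2. f_equal.
  do 2 (apply functional_extensionality; intro). apply sw_same.
Qed.

Lemma qSwap_comm xs a b (X : qT) : qSwap xs a b X = qSwap xs b a X.
Proof.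
  rewrite !(proj1 (qSwap_qMap _ _ _)). f_equal.
  do 2 (apply functional_extensionality; intro). apply sw_comm.
Qed.

Lemma qGood_qSwap xs a b (X : qT) : qGood (qSwap xs a b X) <-> qGood X.
Proof. rewrite (proj1 (qSwap_qMap _ _ _)). apply qGood_qMap. Qed.

Lemma not_qOcc_qSwap xs a b u (X : qT) :
  ~ qOcc xs u X -> u <> a -> u <> b -> ~ qOcc xs u (qSwap xs a b X).
Proof.
  intros Hu Ha Hb Hocc. rewrite (proj1 (qSwap_qMap _ _ _)) in Hocc.
  destruct (proj1 (qOcc_qMap _) X xs u Hocc) as [w [Hw E]].
  apply sw_preimage_fix in E; [subst; contradiction | assumption | assumption].
Qed.

Scheme alpha_mut := Induction for alpha Sort Prop
  with alphaAbs_mut := Induction for alphaAbs Sort Prop.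
Combined Scheme alpha_alphaAbs_ind from alpha_mut, alphaAbs_mut.

Lemma alpha_qMap f (Hf : injective_sorted f) :
  (forall X Y : qT, alpha X Y -> alpha (qMap f X) (qMap f Y)) /\
  (forall A B : qA, alphaAbs A B -> alphaAbs (qMapAbs f A) (qMapAbs f B)).
Proof.
  apply alpha_alphaAbs_ind; simpl.
  - constructor.
  - intros d inp inp' binp binp' Hdom _ IHi Hbdom _ IHb.
    apply alpha_Op; intro i.
    + specialize (Hdom i). destruct (inp i), (inp' i); intuition congruence.
    + intros X X' E E'. destruct (inp i) eqn:F; [|discriminate].
      destruct (inp' i) eqn:F'; [|discriminate].
      injection E as <-; injection E' as <-. eauto.
    + specialize (Hbdom i). destruct (binp i), (binp' i); intuition congruence.
    + intros A A' E E'. destruct (binp i) eqn:F; [|discriminate].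
      destruct (binp' i) eqn:F'; [|discriminate].
      injection E as <-; injection E' as <-. eauto.
  - intros xs x x' X X' y Hyx Hyx' Hy Hy' _ IH.
    apply alpha_Abs with (y := f xs y).
    + intro E; apply Hf in E; auto.
    + intro E; apply Hf in E; auto.
    + apply qFresh_qMap; assumption.
    + apply qFresh_qMap; assumption.
    + revert IH. rewrite !(proj1 (qSwap_qMap _ _ _)), !(proj1 (qMap_comp _ _)).
      replace (fun s v => sw xs (f xs y) (f xs x) s (f s v))
        with (fun s v => f s (sw xs y x s v))
        by (do 2 (apply functional_extensionality; intro); apply sw_injective_conj; auto).
      replace (fun s v => sw xs (f xs y) (f xs x') s (f s v))
        with (fun s v => f s (sw xs y x' s v))
        by (do 2 (apply functional_extensionality; intro); apply sw_injective_conj; auto).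
      trivial.
Qed.

Lemma alpha_qSwap xs a b (X Y : qT) : alpha X Y -> alpha (qSwap xs a b X) (qSwap xs a b Y).
Proof. rewrite !(proj1 (qSwap_qMap _ _ _)). apply alpha_qMap, sw_injective. Qed.

Lemma alpha_sym :
  (forall X Y : qT, alpha X Y -> alpha Y X) /\
  (forall A B : qA, alphaAbs A B -> alphaAbs B A).
Proof.
  apply alpha_alphaAbs_ind.
  - constructor.
  - intros d inp inp' binp binp' Hdom _ IHi Hbdom _ IHb.
    apply alpha_Op; intros; [rewrite Hdom | eauto | rewrite Hbdom | eauto]; tauto.
  - intros; eapply alpha_Abs; eauto.
Qed.

Lemma alpha_qGood :
  (forall X Y : qT, alpha X Y -> qGood X -> qGood Y) /\
  (forall A B : qA, alphaAbs A B -> qGoodAbs A -> qGoodAbs B).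
Proof.
  apply alpha_alphaAbs_ind; simpl.
  - tauto.
  - intros d inp inp' binp binp' Hdom _ IHi Hbdom _ IHb [Gdom [Gbdom [Gi Gb]]].
    split; [| split; [| split]].
    + revert Gdom; apply cardLt_subset; unfold dom; intros i Hi E; apply Hi, Hdom, E.
    + revert Gbdom; apply cardLt_subset; unfold dom; intros i Hi E; apply Hi, Hbdom, E.
    + intro i. specialize (Gi i). destruct (inp' i) eqn:E'; [|exact I].
      destruct (inp i) eqn:E; [eauto | apply Hdom in E; congruence].
    + intro i. specialize (Gb i). destruct (binp' i) eqn:E'; [|exact I].
      destruct (binp i) eqn:E; [eauto | apply Hbdom in E; congruence].
  - intros xs x x' X X' y _ _ _ _ _ IH G. apply (qGood_qSwap xs y x'), IH, qGood_qSwap, G.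
Qed.

Lemma alphaAbs_qAbs_congr zs z (X X' : qT) :
  qGood X -> qGood X' -> alpha X X' -> alphaAbs (qAbs zs z X) (qAbs zs z X').
Proof.
  intros G G' H.
  pick_fresh u (fun v => (v = z \/ qOcc zs v X) \/ qOcc zs v X').
  apply alpha_Abs with (y := u); auto; try (apply qFresh_of_not_qOcc; assumption).
  apply alpha_qSwap, H.
Qed.

Lemma alpha_refl :
  (forall X : qT, qGood X -> alpha X X) /\ (forall A : qA, qGoodAbs A -> alphaAbs A A).
Proof.
  apply qterm_qabs_ind; simpl.
  - constructor.
  - intros d inp binp IHi IHb [_ [_ [Gi Gb]]].
    apply alpha_Op; intro i; try reflexivity.
    + intros X X' E E'. rewrite E in E'. injection E' as <-.
      specialize (IHi i); specialize (Gi i). rewrite E in IHi, Gi. auto.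
    + intros A A' E E'. rewrite E in E'. injection E' as <-.
      specialize (IHb i); specialize (Gb i). rewrite E in IHb, Gb. auto.
  - intros s x Y IH G. apply alphaAbs_qAbs_congr; auto.
Qed.

Lemma alphaAbs_rebind_step s a b (X : qT) :
  qGood X ->
  (forall c d, qFresh s c X -> qFresh s d X -> alpha (qSwap s c d X) X) ->
  a <> b -> qFresh s b X ->
  alphaAbs (qAbs s b (qSwap s a b X)) (qAbs s a X).
Proof.
  intros G Hswap Hab Hb.
  pick_fresh u (fun v => (v = a \/ v = b) \/ qOcc s v X).
  apply alpha_Abs with (y := u); auto.
  - apply qFresh_of_not_qOcc, not_qOcc_qSwap; auto.
  - apply qFresh_of_not_qOcc; assumption.
  - rewrite (qSwap_qSwap_eq s u b s a b s u a s u b)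
      by (intros; rewrite (sw_comm s a b); apply sw_sw_conj; auto).
    apply alpha_qSwap, Hswap; auto. apply qFresh_of_not_qOcc; assumption.
Qed.

Lemma alpha_qSwap_fresh :
  (forall X : qT, qGood X -> forall s a b, qFresh s a X -> qFresh s b X ->
     alpha (qSwap s a b X) X) /\
  (forall A : qA, qGoodAbs A -> forall s a b, qFreshAbs s a A -> qFreshAbs s b A ->
     alphaAbs (qSwapAbs s a b A) A).
Proof.
  apply qterm_qabs_ind; simpl.
  - intros zs x _ s a b Ha Hb. rewrite sw_fix by assumption. constructor.
  - intros d inp binp IHi IHb [_ [_ [Gi Gb]]] s a b [Hai Hab] [Hbi Hbb].
    apply alpha_Op; intro i.
    + destruct (inp i); split; congruence.
    + intros X X' E E'. destruct (inp i) eqn:F; [|discriminate].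
      injection E as <-; injection E' as <-.
      specialize (IHi i); specialize (Gi i); specialize (Hai i); specialize (Hbi i).
      rewrite F in *. auto.
    + destruct (binp i); split; congruence.
    + intros A A' E E'. destruct (binp i) eqn:F; [|discriminate].
      injection E as <-; injection E' as <-.
      specialize (IHb i); specialize (Gb i); specialize (Hab i); specialize (Hbb i).
      rewrite F in *. auto.
  - intros zs z Y IH G s a b Ha Hb.
    destruct (classic (a = b)) as [<-|Hab].
    { rewrite sw_same, qSwap_same. apply alpha_refl; exact G. }
    destruct (classic (zs = s /\ z = a)) as [[-> ->]|Hza].
    { replace (sw s a b s a) with b by sw_cases.
      destruct Hb as [[_ ?]|Hb]; [congruence|].
      apply alphaAbs_rebind_step; auto. }
    destruct (classic (zs = s /\ z = b)) as [[-> ->]|Hzb].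
    { replace (sw s a b s b) with a by sw_cases.
      destruct Ha as [[_ ?]|Ha]; [congruence|].
      rewrite qSwap_comm. apply alphaAbs_rebind_step; auto. }
    rewrite sw_fix by assumption.
    destruct Ha as [?|Ha]; [tauto|]. destruct Hb as [?|Hb]; [tauto|].
    apply alphaAbs_qAbs_congr; auto. apply qGood_qSwap; exact G.
Qed.

Lemma alphaAbs_rebind s a b (X : qT) :
  qGood X -> a <> b -> qFresh s b X ->
  alphaAbs (qAbs s b (qSwap s a b X)) (qAbs s a X).
Proof.
  intros G Hab Hb. apply alphaAbs_rebind_step; auto.
  intros; apply alpha_qSwap_fresh; assumption.
Qed.

Lemma alpha_extend_through_abs (T : qT) s w x x' (X X' : qT) :
  (forall Y Z, alpha T Y -> alpha Y Z -> alpha T Z) ->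
  qGood X -> alphaAbs (qAbs s x X) (qAbs s x' X') ->
  w <> x -> w <> x' -> ~ qOcc s w X -> ~ qOcc s w X' ->
  alpha T (qSwap s w x X) -> alpha T (qSwap s w x' X').
Proof.
  intros Htrans G Habs Hwx Hwx' Hw Hw' HT.
  assert (G' : qGood X') by (apply (proj2 alpha_qGood _ _ Habs); exact G).
  inversion Habs as [? ? ? ? ? y Hyx Hyx' Hy Hy' Hswap]; subst.
  apply qFresh_of_not_qOcc in Hw, Hw'.
  (* w and y are both fresh, so swapping with w agrees with first swapping with y *)
  apply (Htrans (qSwap s w x' (qSwap s w y X'))).
  - apply (Htrans (qSwap s w x (qSwap s w y X))).
    + apply (Htrans _ _ HT), (proj1 alpha_sym), alpha_qSwap, alpha_qSwap_fresh; auto.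
    + rewrite (qSwap_qSwap_eq s w x s w y s w y s y x)
        by (intros; symmetry; apply sw_sw_conj; auto).
      rewrite (qSwap_qSwap_eq s w x' s w y s w y s y x')
        by (intros; symmetry; apply sw_sw_conj; auto).
      apply alpha_qSwap, Hswap.
  - apply alpha_qSwap, alpha_qSwap_fresh; auto.
Qed.

Lemma alpha_trans_qMap :
  (forall (Q : qT) f, injective_sorted f -> qGood Q -> forall Y Z,
     alpha (qMap f Q) Y -> alpha Y Z -> alpha (qMap f Q) Z) /\
  (forall (A : qA) f, injective_sorted f -> qGoodAbs A -> forall B C,
     alphaAbs (qMapAbs f A) B -> alphaAbs B C -> alphaAbs (qMapAbs f A) C).
Proof.
  apply qterm_qabs_ind; simpl.
  - intros s x f _ _ Y Z H1 H2. inversion H1; subst. inversion H2; subst. constructor.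
  - intros d inp binp IHi IHb f Hf [_ [_ [Gi Gb]]] Y Z H1 H2.
    inversion H1 as [|? ? inp' ? binp' Hdom1 Hi1 Hbdom1 Hb1]; subst.
    inversion H2 as [|? ? inp'' ? binp'' Hdom2 Hi2 Hbdom2 Hb2]; subst.
    apply alpha_Op; intro i.
    + rewrite Hdom1, Hdom2. tauto.
    + intros X X'' E E''. specialize (IHi i); specialize (Gi i).
      destruct (inp i) as [Q|] eqn:F; [|discriminate]. injection E as <-.
      destruct (inp' i) as [X'|] eqn:F'.
      * apply (IHi f Hf Gi X'); [apply (Hi1 i); [rewrite F|]|apply (Hi2 i)]; auto.
      * apply Hdom1 in F'. rewrite F in F'. discriminate.
    + rewrite Hbdom1, Hbdom2. tauto.
    + intros A A'' E E''. specialize (IHb i); specialize (Gb i).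
      destruct (binp i) as [Q|] eqn:F; [|discriminate]. injection E as <-.
      destruct (binp' i) as [A'|] eqn:F'.
      * apply (IHb f Hf Gb A'); [apply (Hb1 i); [rewrite F|]|apply (Hb2 i)]; auto.
      * apply Hbdom1 in F'. rewrite F in F'. discriminate.
  - intros s x Q IH f Hf GQ B C H1 H2.
    inversion H1 as [? ? x' ? X' ? ? ? ? ? ?]; subst.
    inversion H2 as [? ? x'' ? X'' ? ? ? ? ? ?]; subst.
    set (x1 := f s x) in *. set (X1 := qMap f Q) in *.
    assert (G1 : qGood X1) by (apply qGood_qMap; exact GQ).
    assert (G' : qGood X') by (apply (proj2 alpha_qGood _ _ H1); exact G1).
    assert (G'' : qGood X'') by (apply (proj2 alpha_qGood _ _ H2); exact G').
    pick_fresh w (fun v => ((((v = x1 \/ v = x') \/ v = x'') \/ qOcc s v X1)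
                            \/ qOcc s v X') \/ qOcc s v X'').
    assert (Htrans : forall Y Z, alpha (qSwap s w x1 X1) Y -> alpha Y Z ->
                                 alpha (qSwap s w x1 X1) Z).
    { unfold X1. rewrite (proj1 (qSwap_qMap _ _ _)), (proj1 (qMap_comp _ _)).
      apply IH; [apply injective_sorted_comp; [apply sw_injective | exact Hf] | exact GQ]. }
    apply alpha_Abs with (y := w); auto; try (apply qFresh_of_not_qOcc; assumption).
    apply (alpha_extend_through_abs _ _ _ x' _ X'); auto.
    apply (alpha_extend_through_abs _ _ _ x1 _ X1); auto.
    apply (proj1 alpha_refl), qGood_qSwap, G1.
Qed.

Lemma alphaE_qGood (X Y : qT) : alphaE X Y -> (qGood X <-> qGood Y).
Proof. apply clos_rst_invariant; [apply alpha_qGood | apply alpha_sym]. Qed.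

Lemma alphaAbsE_qGoodAbs (A B : qA) : alphaAbsE A B -> (qGoodAbs A <-> qGoodAbs B).
Proof. apply clos_rst_invariant; [apply alpha_qGood | apply alpha_sym]. Qed.

Lemma alphaE_alpha (X Y : qT) : alphaE X Y -> qGood X -> alpha X Y.
Proof.
  apply clos_rst_partial_equiv; [apply alpha_qGood | apply alpha_sym | apply alpha_refl |].
  intros Q Y' Z G. rewrite <- (proj1 qMap_id Q).
  apply alpha_trans_qMap; [apply injective_sorted_id | exact G].
Qed.

Lemma alphaAbsE_alphaAbs (A B : qA) : alphaAbsE A B -> qGoodAbs A -> alphaAbs A B.
Proof.
  apply clos_rst_partial_equiv; [apply alpha_qGood | apply alpha_sym | apply alpha_refl |].
  intros Q B' C G. rewrite <- (proj2 qMap_id Q).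
  apply alpha_trans_qMap; [apply injective_sorted_id | exact G].
Qed.

Notation term := (term var varsort index bindex opsym).
Notation abs := (abs var varsort index bindex opsym).

Lemma clsT_eq (X Y : qT) : alphaE X Y -> clsT X = clsT Y.
Proof. apply clos_rst_class_eq. Qed.

Lemma clsA_eq (A B : qA) : alphaAbsE A B -> clsA A = clsA B.
Proof. apply clos_rst_class_eq. Qed.

Lemma alphaE_repT_clsT (X : qT) : alphaE X (repT (clsT X)).
Proof.
  unfold repT, alphaE. apply rst_sym. rewrite <- clos_rst_class_choice. apply rst_refl.
Qed.

Lemma alphaAbsE_repA_clsA (A : qA) : alphaAbsE A (repA (clsA A)).
Proof.
  unfold repA, alphaAbsE. apply rst_sym. rewrite <- clos_rst_class_choice. apply rst_refl.
Qed.

Lemma clsT_repT (T : term) : clsT (repT T) = T.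
Proof.
  destruct T as [C h]. apply subset_eq_compat. symmetry. apply clos_rst_class_choice.
Qed.

Lemma clsA_repA (A : abs) : clsA (repA A) = A.
Proof.
  destruct A as [C h]. apply subset_eq_compat. symmetry. apply clos_rst_class_choice.
Qed.

Lemma good_clsT (X : qT) : qGood X -> good (clsT X).
Proof. intro G. apply (alphaE_qGood _ _ (alphaE_repT_clsT X)), G. Qed.

Lemma goodAbs_clsA (A : qA) : qGoodAbs A -> goodAbs (clsA A).
Proof. intro G. apply (alphaAbsE_qGoodAbs _ _ (alphaAbsE_repA_clsA A)), G. Qed.

Lemma clsT_qOp (d : opsym) (inp : input index qT) (binp : input bindex qA) :
  qGood (qOp d inp binp) ->
  clsT (qOp d inp binp) =
  Op d (fun i => match inp i with Some Y => Some (clsT Y) | None => None end)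
       (fun i => match binp i with Some A => Some (clsA A) | None => None end).
Proof.
  intros [_ [_ [Gi Gb]]]. apply clsT_eq, rst_step, alpha_Op; intro i.
  - destruct (inp i); split; congruence.
  - intros X X' E E'. specialize (Gi i). destruct (inp i); [|discriminate].
    injection E as <-; injection E' as <-.
    apply alphaE_alpha; [apply alphaE_repT_clsT | exact Gi].
  - destruct (binp i); split; congruence.
  - intros A A' E E'. specialize (Gb i). destruct (binp i); [|discriminate].
    injection E as <-; injection E' as <-.
    apply alphaAbsE_alphaAbs; [apply alphaAbsE_repA_clsA | exact Gb].
Qed.

Lemma clsA_qAbs_rebind s x y (Y : qT) : qGood Y -> y <> x -> ~ qOcc s y Y ->
  clsA (qAbs s x Y) = Abs s y (clsT (qSwap s y x Y)).
Proof.
  intros G Hyx Hy.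
  assert (G' : qGood (qSwap s y x Y)) by (apply qGood_qSwap; exact G).
  apply clsA_eq, rst_trans with (qAbs s y (qSwap s y x Y)).
  - apply rst_sym, rst_step. rewrite qSwap_comm.
    apply alphaAbs_rebind; auto. apply qFresh_of_not_qOcc; assumption.
  - apply rst_step, alphaAbs_qAbs_congr; [exact G' | apply good_clsT, G' |].
    apply alphaE_alpha; [apply alphaE_repT_clsT | exact G'].
Qed.

Section FreshInduction.
Variables (param : Type) (varsOf : param -> varsort -> var -> Prop)
  (phi : term -> param -> bool) (phiAbs : abs -> param -> bool).
Hypothesis varsOf_small : forall xs p, cardLt (varsOf p xs) var.
Hypothesis phi_Var : forall xs x p, phi (Var xs x) p = true.
Hypothesis phi_Op : forall d (inp : input index term) (binp : input bindex abs) p,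
  cardLt (dom inp) var -> cardLt (dom binp) var ->
  (forall i X, inp i = Some X -> good X /\ (forall q, phi X q = true)) ->
  (forall i A, binp i = Some A -> goodAbs A /\ (forall q, phiAbs A q = true)) ->
  phi (Op d inp binp) p = true.
Hypothesis phiAbs_Abs : forall xs x X p,
  good X -> phi X p = true -> ~ varsOf p xs x -> phiAbs (Abs xs x X) p = true.

Lemma phi_clsT_qMap :
  (forall (Y : qT) f, injective_sorted f -> qGood Y ->
     forall p, phi (clsT (qMap f Y)) p = true) /\
  (forall (A : qA) f, injective_sorted f -> qGoodAbs A ->
     forall p, phiAbs (clsA (qMapAbs f A)) p = true).
Proof.
  apply qterm_qabs_ind.
  - intros s x f _ _ p. apply phi_Var.
  - intros d inp binp IHi IHb f Hf G p.
    assert (Gf : qGood (qMap f (qOp d inp binp))) by (apply qGood_qMap; exact G).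
    simpl in G, Gf |- *. rewrite (clsT_qOp _ _ _ Gf).
    destruct G as [Gdom [Gbdom [Gi Gb]]].
    apply phi_Op.
    + revert Gdom; apply cardLt_subset; unfold dom; intro i; destruct (inp i); congruence.
    + revert Gbdom; apply cardLt_subset; unfold dom; intro i; destruct (binp i); congruence.
    + intros i X E. specialize (IHi i); specialize (Gi i).
      destruct (inp i); [injection E as <- | discriminate].
      split; [apply good_clsT, qGood_qMap, Gi | intro; apply IHi; assumption].
    + intros i A E. specialize (IHb i); specialize (Gb i).
      destruct (binp i); [injection E as <- | discriminate].
      split; [apply goodAbs_clsA, qGood_qMap, Gb | intro; apply IHb; assumption].
  - intros s x Y IH f Hf G p. simpl.
    assert (Gf : qGood (qMap f Y)) by (apply qGood_qMap; exact G).
    pose proof (varsOf_small s p).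
    pick_fresh y (fun v => (varsOf p s v \/ v = f s x) \/ qOcc s v (qMap f Y)).
    rewrite (clsA_qAbs_rebind s (f s x) y (qMap f Y)) by assumption.
    apply phiAbs_Abs; [apply good_clsT, qGood_qSwap, Gf | | assumption].
    rewrite (proj1 (qSwap_qMap _ _ _)), (proj1 (qMap_comp _ _)).
    apply IH; [apply injective_sorted_comp; [apply sw_injective | exact Hf] | exact G].
Qed.

End FreshInduction.
End QuasiTerms.

Theorem theorem1 (var varsort index bindex opsym : Type)
  (Hinf : infiniteT var) (Hreg : regularT var)
  (param : Type) (varsOf : param -> varsort -> var -> Prop)
  (phi : term var varsort index bindex opsym -> param -> bool)
  (phiAbs : abs var varsort index bindex opsym -> param -> bool)
  (H1 : forall xs p, cardLt (varsOf p xs) var)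
  (H2 : forall xs x p, phi (Var xs x) p = true)
  (H3 : forall d (inp : input index (term var varsort index bindex opsym))
          (binp : input bindex (abs var varsort index bindex opsym)) p,
      cardLt (dom inp) var -> cardLt (dom binp) var ->
      (forall i X, inp i = Some X -> good X /\ (forall q, phi X q = true)) ->
      (forall i A, binp i = Some A -> goodAbs A /\ (forall q, phiAbs A q = true)) ->
      phi (Op d inp binp) p = true)
  (H4 : forall xs x X p,
      good X -> phi X p = true -> ~ varsOf p xs x ->
      phiAbs (Abs xs x X) p = true) :
  (forall X p, good X -> phi X p = true) /\
  (forall A p, goodAbs A -> phiAbs A p = true).
Proof.
  destruct (phi_clsT_qMap _ _ _ _ _ Hinf Hreg _ _ _ _ H1 H2 H3 H4) as [Hterm Habs].
  split.
  - intros X p G. rewrite <- (clsT_repT _ _ _ _ _ X), <- (proj1 (qMap_id _ _ _ _ _) (repT X)).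
    apply Hterm; [apply injective_sorted_id | exact G].
  - intros A p G. rewrite <- (clsA_repA _ _ _ _ _ A), <- (proj2 (qMap_id _ _ _ _ _) (repA A)).
    apply Habs; [apply injective_sorted_id | exact G].
Qed.
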